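(* Let $W$ be an outcome returned by \textsc{fair greedy capture} parameterized by $q\le k$ on an instance with $N=C$. Then (1) $W$ is in the $5$-$q$-core; (2) $W$ satisfies $3$-$q$-individual fairness if $k\le n$; (3) for every $\gamma>1$, $W$ is in the $\left(\gamma,\frac{5\gamma}{\gamma-1}\right)$-$q$-transferable core restricted to $\ell<2q$.
   Context: Let $(\mathcal X,d)$ be a metric space, $N=[n]$ a set of agents located in $\mathcal X$, candidate set $C=N$, $k\in\mathbb N^+$; an outcome is $W\subseteq C$ with $|W|\le k$; $B(i,r)=\{x\in\mathcal X:d(i,x)\le r\}$; $d^q(i,W)$ is the distance from $i$ to its $q$-th closest point of $W$. \textsc{Fair greedy capture} with parameter $q$: maintain a set of active agents (initially all of $N$) and $W=\emptyset$, and increase a radius $\delta$ continuously from $0$ around every agent. Whenever some ball $B(p,\delta)$, $p\in N$, contains at least $qn/k$ active agents, select $q$ of these active agents uniformly at random and add them to $W$, and delete (deactivate) in total $\lceil qn/k\rceil$ of the active agents in this ball. After the capturing phase, a final random sampling step selects the remaining centers among the remaining agents so that each agent ends up selected with probability exactly $k/n$. $\alpha$-$q$-core: no $\ell\in\mathbb N$, $N'\subseteq N$ with $|N'|\ge\ell n/k$, and $C'\subseteq C$ with $q\le|C'|\le\ell$ such that $\alpha\,d^q(i,C')<d^q(i,W)$ for all $i\in N'$. $\beta$-$q$-individual fairness (for $k\le n$): $d^q(i,W)\le\beta\,r^q(i)$ for all $i\in N$, with $r^q(i)=\min\{r:|B(i,r)\cap N|\ge qn/k\}$. $(\gamma,\alpha)$-$q$-transferable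 core restricted to $\ell<2q$: no $\ell\in\mathbb N$ with $\ell<2q$, $N'\subseteq N$ with $|N'|\ge\gamma\ell n/k$, and $C'\subseteq C$ with $q\le|C'|\le\ell$ such that $\alpha\sum_{i\in N'}d^q(i,C')<\sum_{i\in N'}d^q(i,W)$. *)

From HB Require Import structures.
From mathcomp Require Import all_boot all_order all_algebra.
From mathcomp Require Import reals.
Set Implicit Arguments. Unset Strict Implicit. Unset Printing Implicit Defensive.
Import Order.TTheory GRing.Theory Num.Theory.
Local Open Scope ring_scope.

Section FGC.
Variables (R : realType) (X : Type) (d : X -> X -> R).

Definition is_metric : Prop :=
  [/\ forall x y, 0 <= d x y,
      forall x y, d x y = 0 <-> x = y,
      forall x y, d x y = d y x
    & forall x y z, d x z <= d x y + d y z].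

Variables (n k q : nat) (loc : 'I_n -> X).
(* agents N = 'I_n located at loc i; candidates C = N *)

Definition ball (p : 'I_n) (r : R) : {set 'I_n} :=
  [set j | d (loc p) (loc j) <= r].

Definition thr : R := (q * n)%:R / k%:R.

(* ceil (q n / k), as a natural number (k > 0) *)
Definition ceil_thr : nat := (q * n + k.-1) %/ k.

(* d^q(i, W): distance from i to its q-th closest point of W
   (the q-th smallest of the distances d(i, j), j in W, with multiplicity) *)
Definition dq (i : 'I_n) (W : {set 'I_n}) : R :=
  nth 0 (sort (fun x y : R => x <= y) [seq d (loc i) (loc j) | j <- enum W]) q.-1.

Definition qualifies (A : {set 'I_n}) (p : 'I_n) (r : R) : Prop :=
  thr <= (#|ball p r :&: A|)%:R.

(* capture A W : starting the capturing phase with active set A (and the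
   radius at the smallest value at which some ball may qualify), the
   capturing phase can add exactly the centers W. *)
Inductive capture : {set 'I_n} -> {set 'I_n} -> Prop :=
| cap_stop A :
    (forall p r, ~ qualifies A p r) -> capture A set0
| cap_step A (p : 'I_n) (r : R) (S D W : {set 'I_n}) :
    qualifies A p r ->
    (forall p' r', qualifies A p' r' -> r <= r') ->
    S \subset ball p r :&: A -> #|S| = q ->
    S \subset D -> D \subset ball p r :&: A -> #|D| = ceil_thr ->
    capture (A :\: D) W ->
    capture A (S :|: W).

(* W is a possible outcome of fair greedy capture: the centers selected in the
   capturing phase plus the ones added by the final sampling step, |W| <= k *)
Definition fgc_outcome (W : {set 'I_n}) : Prop :=
  exists W0, [/\ capture setT W0, W0 \subset W & (#|W| <= k)%N].

Definition in_q_core (alpha : R) (W : {set 'I_n}) : Prop :=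
  ~ exists (l : nat) (N' C' : {set 'I_n}),
      [/\ (l * n)%:R / k%:R <= (#|N'|)%:R :> R,
          (q <= #|C'| <= l)%N
        & forall i, i \in N' -> alpha * dq i C' < dq i W].

(* beta-q-individual fairness: d^q(i,W) <= beta r^q(i), where
   r^q(i) = min { r | |B(i,r) cap N| >= q n / k } (the minimum is attained) *)
Definition q_individually_fair (beta : R) (W : {set 'I_n}) : Prop :=
  forall i (r : R), thr <= (#|ball i r|)%:R -> dq i W <= beta * r.

Definition in_q_tcore_restr (gamma alpha : R) (W : {set 'I_n}) : Prop :=
  ~ exists (l : nat) (N' C' : {set 'I_n}),
      [/\ (l < 2 * q)%N,
          gamma * ((l * n)%:R / k%:R) <= (#|N'|)%:R :> R,
          (q <= #|C'| <= l)%N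
        & alpha * (\sum_(i in N') dq i C') < \sum_(i in N') dq i W].

End FGC.

From HB Require Import structures.
From mathcomp Require Import all_boot all_order all_algebra.
From mathcomp Require Import reals.
From mathcomp Require Import lra zify.

Set Implicit Arguments.
Unset Strict Implicit.
Unset Printing Implicit Defensive.
Import Order.TTheory GRing.Theory Num.Theory.
Local Open Scope ring_scope.

(* Fix a deviation (N', C') and write r_i = d^q(i, C'); a near point of i is a
   c in C' with d(i, c) <= r_i, and every agent has at least q of them.
   Two facts about W drive the proof.  First, d^q(., W) is 1-Lipschitz, and if a
   ball of radius rho holds q n / k agents then one of them, j, has
   d^q(j, W) <= 2 rho: the capturing phase deleted j in a ball of radius at most
   rho from which it selected q centers.  Second, call i well supported if for
   some near point c of i at least q n / k agents of N' having c as a near point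
   have radius at most r_i; they lie in B(c, r_i), so d^q(i, W) <= 4 r_i.  For a
   fixed c, fewer than q n / k agents fail this at c (look at the one of largest
   radius), so counting pairs (i, c) shows that fewer than l n / k agents are
   not well supported: some member of N' is, which rules out a 5-core
   deviation.  If l < 2q, any two agents share a near point, so comparing each
   agent that is not well supported with the well-supported g of least radius
   gives d^q(i, W) <= r_i + 5 r_g; averaging gives the transferable-core bound.
   Individual fairness is the first fact applied to B(i, r^q(i)). *)

Lemma sum_card_exchange (I J : finType) (A : {set I}) (B : {set J})
    (F : I -> {set J}) :
  (forall i, i \in A -> F i \subset B) ->
  (\sum_(i in A) #|F i| = \sum_(j in B) #|[set i in A | j \in F i]|)%N.
Proof.
move=> FB; under eq_bigr do rewrite -sum1_card.
rewrite (exchange_big_dep (mem B)) => [|i j iA jF]; last exact: subsetP (FB i iA) j jF.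
by apply: eq_bigr => j _; rewrite sum1dep_card.
Qed.

Lemma card_sparse_prefix_lt (R : realDomainType) (T : finType) (A : {set T})
    (r : T -> R) (t : R) :
  0 < t -> (#|[set i in A | (#|[set j in A | r j <= r i]|)%:R < t]|)%:R < t.
Proof.
move=> t_gt0; set L := [set i in A | _].
have [->|[i0 i0L]] := set_0Vmem L; first by rewrite cards0.
have [im imL immax] := @arg_maxP _ R _ i0 (mem L) r i0L.
have /setIdP[_ /(le_lt_trans _)] : im \in L := imL; apply.
rewrite ler_nat subset_leq_card //; apply/subsetP => j jL.
rewrite inE (immax j jL : r j <= r im) andbT.
by move: jL; rewrite inE => /andP[].
Qed.

Lemma split_sum_bound (R : realFieldType)
    (gamma r_good r_bad d_good d_bad r0 n_good n_bad : R) :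
  1 < gamma -> 0 <= r_good -> 0 <= r_bad -> 0 <= r0 ->
  n_bad * gamma < n_good + n_bad -> r0 * n_good <= r_good ->
  d_good <= 4 * r_good -> d_bad <= r_bad + 5 * r0 * n_bad ->
  d_good + d_bad <= 5 * gamma / (gamma - 1) * (r_good + r_bad).
Proof.
move=> gamma_gt1 r_good_ge0 r_bad_ge0 r0_ge0 n_bad_small r0_good d_good_le d_bad_le.
have gamma1_gt0 : 0 < gamma - 1 by rewrite subr_gt0.
rewrite mulrAC ler_pdivlMr //.
have : r0 * (n_bad * (gamma - 1)) <= r_good.
  by apply: le_trans r0_good; rewrite ler_wpM2l // ltW // mulrBr mulr1 ltrBlDr.
nra.
Qed.

Section FairGreedyCapture.
Variables (R : realType) (X : Type) (d : X -> X -> R) (n k q : nat) (loc : 'I_n -> X).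
Hypothesis q_gt0 : (0 < q)%N.

Let dists i (W : {set 'I_n}) :=
  sort (fun x y : R => x <= y) [seq d (loc i) (loc j) | j <- enum W].

Let dists_sorted i W : sorted <=%O (dists i W).
Proof. exact: (sort_sorted (@le_total _ R)). Qed.

Let count_dists i W x :
  count (<= x)%O (dists i W) = #|ball d loc i x :&: W|.
Proof.
rewrite (permP (permEl (perm_sort _ _))) count_map -size_filter.
set P := preim _ _; have /card_uniqP <- := filter_uniq P (enum_uniq (mem W)).
by apply: eq_card => w; rewrite mem_filter mem_enum !inE.
Qed.

Lemma dq_le_of_card i (W : {set 'I_n}) x :
  (q <= #|ball d loc i x :&: W|)%N -> dq d q loc i W <= x.
Proof.
move=> qW; apply: nth_count_le; first exact: dists_sorted.
by rewrite count_dists prednK.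
Qed.

Lemma card_dq_ball i (W : {set 'I_n}) :
  (q <= #|W|)%N -> (q <= #|ball d loc i (dq d q loc i W) :&: W|)%N.
Proof.
move=> qW; rewrite -count_dists leqNgt; apply/negP => lt_count.
suff : dq d q loc i W < dq d q loc i W by rewrite ltxx.
apply: nth_count_gt; first exact: dists_sorted.
rewrite size_sort size_map -cardE (leq_trans _ qW) ?andbT; last by rewrite prednK.
by rewrite -ltnS prednK.
Qed.

Lemma dq_default i (W : {set 'I_n}) : (#|W| < q)%N -> dq d q loc i W = 0.
Proof.
by move=> Wq; rewrite /dq nth_default // size_sort size_map -cardE -ltnS prednK.
Qed.

Hypothesis d_ge0 : forall x y, 0 <= d x y.

Lemma dq_ge0 i (W : {set 'I_n}) : 0 <= dq d q loc i W.
Proof.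
have [qW|Wq] := leqP q #|W|; last by rewrite dq_default.
rewrite /dq -/(dists i W).
have : nth 0 (dists i W) q.-1 \in dists i W.
  by rewrite mem_nth // size_sort size_map -cardE prednK.
by rewrite mem_sort => /mapP[j _ ->].
Qed.

Hypothesis d_sym : forall x y, d x y = d y x.
Hypothesis d_tri : forall x y z, d x z <= d x y + d y z.

Lemma dq_le_dist_add i j (W : {set 'I_n}) :
  dq d q loc i W <= d (loc i) (loc j) + dq d q loc j W.
Proof.
have [qW|Wq] := leqP q #|W|; last by rewrite !dq_default // addr0.
apply/dq_le_of_card/(leq_trans (card_dq_ball j qW))/subset_leq_card.
apply/subsetP => w; rewrite !inE => /andP[djw ->]; rewrite andbT.
by apply: (le_trans (d_tri _ (loc j) _)); rewrite lerD2l.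
Qed.

Lemma capture_serves_dense_balls A W0 (W : {set 'I_n}) :
  capture d k q loc A W0 -> W0 \subset W ->
  forall (Q : {set 'I_n}) m rho, Q \subset A -> Q \subset ball d loc m rho ->
  thr R n k q <= (#|Q|)%:R -> exists2 j, j \in Q & dq d q loc j W <= rho + rho.
Proof.
move=> cap; elim: cap W => {A W0}
  [A no_qual|A p r S D W0 _ r_min SA cardS _ DA _ _ IH] W W0W Q m rho QA Qm Qthr;
  have qual_rho : qualifies d k q loc A m rho
    by apply: le_trans Qthr _; rewrite ler_nat subset_leq_card // subsetI Qm.
  by have := no_qual m rho.
have [QD|/pred0Pn[j /andP[jQ jD]]] := boolP [disjoint Q & D].
  apply: (IH W _ Q m rho _ Qm Qthr); first by apply: subset_trans W0W; exact: subsetUr.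
  by rewrite subsetD QA.
exists j => //; apply: dq_le_of_card => //; rewrite -cardS subset_leq_card //.
have /subsetIP[Sp SW] : S \subset ball d loc p r :&: W.
  by rewrite subsetI (subset_trans SA) ?subsetIl // (subset_trans _ W0W) ?subsetUl.
apply/subsetP => s sS; rewrite !inE (subsetP SW) // andbT.
have := subsetP Sp s sS; have := subsetP (subset_trans DA (subsetIl _ _)) j jD.
rewrite !inE => dpj dps; have r_rho := r_min m rho qual_rho.
by apply: (le_trans (d_tri _ (loc p) _)); rewrite d_sym lerD ?(le_trans _ r_rho).
Qed.

Definition serves_dense_balls (W : {set 'I_n}) := forall (Q : {set 'I_n}) m rho,
  Q \subset ball d loc m rho -> thr R n k q <= (#|Q|)%:R ->
  exists2 j, j \in Q & dq d q loc j W <= rho + rho.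

Lemma fgc_outcome_serves_dense_balls W : fgc_outcome d k q loc W -> serves_dense_balls W.
Proof.
case=> W0 [cap W0W _] Q m rho.
exact: capture_serves_dense_balls cap W0W Q m rho (subsetT Q).
Qed.

Section ServedOutcome.
Variable W : {set 'I_n}.
Hypothesis W_serves : serves_dense_balls W.

Lemma dq_le_three_radius i r : thr R n k q <= (#|ball d loc i r|)%:R ->
  dq d q loc i W <= 3 * r.
Proof.
move=> dense; have [j ij jW] := W_serves (subxx _) dense.
move: ij; rewrite inE => ij.
have := dq_le_dist_add i j W; lra.
Qed.

Section Deviation.
Hypothesis k_gt0 : (0 < k)%N.
Variables (N' C : {set 'I_n}) (l : nat).
Hypothesis C_size : (q <= #|C| <= l)%N.

Let r i := dq d q loc i C.
Let near i := ball d loc i (r i) :&: C.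
Let clients c := [set j in N' | c \in near j].
Let dense_below c i := thr R n k q <= (#|[set j in clients c | r j <= r i]|)%:R.
Let well_supported i := [exists c in near i, dense_below c i].
Let good := N' :&: [set i | well_supported i].
Let bad := N' :\: [set i | well_supported i].

Let q_le_C : (q <= #|C|)%N. Proof. by case/andP: C_size. Qed.

Let r_ge0 i : 0 <= r i. Proof. exact: dq_ge0. Qed.

Let card_near i : (q <= #|near i|)%N. Proof. exact: card_dq_ball. Qed.

Lemma well_supported_dq_le i : well_supported i -> dq d q loc i W <= 4 * r i.
Proof.
case/existsP => c /andP[ci dense].
have Qc : [set j in clients c | r j <= r i] \subset ball d loc c (r i).
  apply/subsetP => j; rewrite !inE => /andP[/andP[_ cj] rji].
  by rewrite d_sym (le_trans _ rji) //; case/andP: cj.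
have [j jQ jW] := W_serves Qc dense.
move: ci jQ; rewrite !inE => /andP[dic _] /andP[/andP[_ /andP[djc _]] rji].
have := dq_le_dist_add i j W.
have := d_tri (loc i) (loc c) (loc j); rewrite (d_sym (loc c)); lra.
Qed.

Lemma card_bad_lt : (#|bad|)%:R < l%:R * (n%:R / k%:R) :> R.
Proof.
pose sparse c :=
  [set i in clients c | (#|[set j in clients c | r j <= r i]|)%:R < thr R n k q].
have n_gt0 : (0 < n)%N.
  by rewrite (leq_trans (leq_trans q_gt0 q_le_C)) // -[X in (_ <= X)%N]card_ord max_card.
have thr_gt0 : 0 < thr R n k q by rewrite divr_gt0 // ltr0n ?muln_gt0 ?q_gt0.
have count_bad : (#|bad| * q <= \sum_(c in C) #|sparse c|)%N.
  apply: (@leq_trans (\sum_(i in bad) #|near i|)).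
    by rewrite -sum_nat_const; apply: leq_sum => i _; exact: card_near.
  rewrite (@sum_card_exchange _ _ _ C) => [|i _]; last exact: subsetIr.
  apply: leq_sum => c _; apply: subset_leq_card; apply/subsetP => i.
  case/setIdP => /setDP[iN' not_ws] ci; rewrite inE [i \in clients c]inE iN' ci /= ltNge.
  by apply: contra not_ws => dense; rewrite inE; apply/existsP; exists c; rewrite ci.
have sum_sparse : \sum_(c in C) (#|sparse c|)%:R < (#|C|)%:R * thr R n k q.
  have [c0 c0C] : exists c0, c0 \in C by apply/card_gt0P/(leq_trans q_gt0).
  rewrite mulr_natl -sumr_const ltr_sum //.
    by apply/hasP; exists c0; rewrite ?mem_index_enum.
  by move=> c _; exact: card_sparse_prefix_lt.
have thrE : thr R n k q = q%:R * (n%:R / k%:R) by rewrite /thr natrM mulrA.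
have q_pos : 0 < q%:R :> R by rewrite ltr0n.
rewrite -(ltr_pM2r q_pos) -natrM.
apply: le_lt_trans (_ : _ <= \sum_(c in C) (#|sparse c|)%:R) _.
  by rewrite -natr_sum ler_nat.
apply: lt_le_trans sum_sparse _; rewrite thrE mulrCA mulrC ler_wpM2r ?mulr_ge0 //.
by rewrite ler_wpM2r ?divr_ge0 // ler_nat; case/andP: C_size.
Qed.

Lemma exists_well_supported : (l * n)%:R / k%:R <= (#|N'|)%:R :> R ->
  exists2 g, g \in N' & well_supported g.
Proof.
rewrite natrM -mulrA => N'_large.
have : (0 < #|good|)%N.
  rewrite lt0n; apply/eqP => good0.
  have := cardsID [set i | well_supported i] N'; rewrite -/good -/bad good0 add0n.
  by move=> bad_eq; move: card_bad_lt; rewrite bad_eq ltNge N'_large.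
by case/card_gt0P => g /setIP[gN']; rewrite inE; exists g.
Qed.

Lemma not_all_dq_gt_five_radius : (l * n)%:R / k%:R <= (#|N'|)%:R :> R ->
  ~ (forall i, i \in N' -> 5 * dq d q loc i C < dq d q loc i W).
Proof.
move=> /exists_well_supported[g gN' ws_g] /(_ g gN'); rewrite -/(r g).
by have := well_supported_dq_le ws_g; have := r_ge0 g; lra.
Qed.

Lemma dist_le_radius_add i j : (l < 2 * q)%N -> d (loc i) (loc j) <= r i + r j.
Proof.
move=> l_lt; have [c /setIP[]] : exists c, c \in near i :&: near j.
  apply/card_gt0P; have := cardsUI (near i) (near j).
  have := card_near i; have := card_near j.
  have : (#|near i :|: near j| <= #|C|)%N.
    by rewrite subset_leq_card // subUset !subsetIr.
  by case/andP: C_size; lia.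
rewrite !inE => /andP[dic _] /andP[djc _].
by apply: (le_trans (d_tri _ (loc c) _)); rewrite (d_sym (loc c)) lerD.
Qed.

Lemma sum_dq_le (gamma : R) : 1 < gamma -> (l < 2 * q)%N ->
  gamma * ((l * n)%:R / k%:R) <= (#|N'|)%:R ->
  \sum_(i in N') dq d q loc i W <=
    5 * gamma / (gamma - 1) * \sum_(i in N') dq d q loc i C.
Proof.
move=> gamma_gt1 l_lt N'_large.
have gamma_gt0 : 0 < gamma := lt_trans ltr01 gamma_gt1.
have ln_ge0 : 0 <= (l * n)%:R / k%:R :> R by rewrite divr_ge0.
have [g gN' ws_g] : exists2 g, g \in N' & well_supported g.
  by apply: exists_well_supported; rewrite (le_trans _ N'_large) // ler_peMl // ltW.
have g_good : g \in good by rewrite inE gN' inE.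
have [g0 g0_good g0_min] := @arg_minP _ R _ g (mem good) r g_good.
have /setIP[_] := g0_good; rewrite inE => ws_g0.
rewrite [X in X <= _](big_setID [set i | well_supported i]).
rewrite [X in _ <= _ * X](big_setID [set i | well_supported i]) /= -/good -/bad.
apply: (@split_sum_bound _ gamma _ _ _ _ (r g0) (#|good|)%:R (#|bad|)%:R) => //.
- by apply: sumr_ge0 => i _; exact: dq_ge0.
- by apply: sumr_ge0 => i _; exact: dq_ge0.
- rewrite -natrD cardsID (lt_le_trans _ N'_large) // [X in X < _]mulrC ltr_pM2l //.
  by rewrite natrM -mulrA card_bad_lt.
- by rewrite mulr_natr -sumr_const ler_sum.
- by rewrite mulr_sumr ler_sum // => i /setIP[_]; rewrite inE => /well_supported_dq_le.
rewrite mulr_natr -sumr_const -big_split /= ler_sum // => i _.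
apply: (le_trans (dq_le_dist_add i g0 W)); rewrite -/(r i).
have := dist_le_radius_add i g0 l_lt; have := well_supported_dq_le ws_g0; lra.
Qed.

End Deviation.
End ServedOutcome.
End FairGreedyCapture.

Theorem theorem12 (R : realType) (X : Type) (d : X -> X -> R)
    (n k q : nat) (loc : 'I_n -> X) (W : {set 'I_n}) :
  is_metric d -> (0 < k)%N -> (1 <= q)%N -> (q <= k)%N ->
  fgc_outcome d k q loc W ->
  [/\ in_q_core d k q loc 5 W,
      ((k <= n)%N -> q_individually_fair d k q loc 3 W)
    & forall gamma : R, 1 < gamma ->
        in_q_tcore_restr d k q loc gamma (5 * gamma / (gamma - 1)) W].
Proof.
case=> d_ge0 _ d_sym d_tri k_gt0 q_gt0 _ fgc.
have W_serves := fgc_outcome_serves_dense_balls q_gt0 d_sym d_tri fgc.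
split.
- case=> l [N' [C [N'_large C_size]]].
  exact: (not_all_dq_gt_five_radius q_gt0 d_ge0 d_sym d_tri W_serves k_gt0
            C_size N'_large).
- by move=> _ i r; apply: dq_le_three_radius.
- move=> gamma gamma_gt1 [l [N' [C [l_lt N'_large C_size]]]]; apply/negP; rewrite -leNgt.
  exact: (sum_dq_le q_gt0 d_ge0 d_sym d_tri W_serves k_gt0
            C_size gamma_gt1 l_lt N'_large).
Qed.
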